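(* Let $k$ be a natural number and let $q \in C^1(\mathbb{R}^n,\mathbb{R})$ be a scalar function such that there exists $m$ with $q(\mathbf{x}) = f(x_m)\cdot \mathbf{x}_{i\neq m}^{\beta}$ for a multi-index $\beta\in\mathbb{N}_0^{n-1}$ and $f$ any function of $x_m$ that can be integrated. Set $\lambda = \left\lceil \frac{|\beta|-1}{2}\right\rceil$ and $W(\mathbf{x}) = \mathcal{A}_{x_m}^{2\lambda+2k} q(\mathbf{x}) = \mathbf{x}_{i\neq m}^{\beta}\, \mathcal{A}_{x_m}^{2\lambda+2k} f(x_m)$. Then $$Q(\mathbf{x}) := \sum_{p=0}^{\lambda} (-1)^p \binom{k+p-1}{p} \partial_{x_m}^{2\lambda-2p}\, \Delta_{\setminus m}^{p} W(\mathbf{x}) = \sum_{p=0}^{\lambda} (-1)^p \binom{k+p-1}{p} \mathcal{A}_{x_m}^{2k+2p}\, \Delta_{\setminus m}^{p} q(\mathbf{x})$$ satisfies $\Delta^k Q = q$, where $\Delta=\sum_{i=1}^n\partial_{x_i}^2$.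
   Context: $\mathbf{x}_{i\neq m}^{\beta}$ denotes $\prod_{i\neq m} x_i^{\beta_i}$ and $|\beta|$ its total degree; $\lceil h\rceil$ is the least integer $\ge h$. The incomplete Laplacian is $\Delta_{\setminus m} f := \sum_{i\neq m}\partial_{x_i}^2 f$, with $\Delta_{\setminus m}^p$ its $p$-fold application. The antiderivative is $\mathcal{A}_{x_j} f(\mathbf{x}) := \int_{x_0}^{x_j} f(x_1,\dots,\xi_j,\dots,x_n)\,d\xi_j$ with freely chosen lower limit $x_0$, and $\mathcal{A}_{x_j}^p := \mathcal{A}_{x_j}^{p-1}\mathcal{A}_{x_j}$ (repeated integration). Zeroth powers of these operators are the identity. *)

From HB Require Import structures.
From mathcomp Require Import all_boot all_order all_algebra.
From mathcomp Require Import all_classical all_reals all_analysis.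
Set Implicit Arguments. Unset Strict Implicit. Unset Printing Implicit Defensive.
Import Order.TTheory GRing.Theory Num.Theory.
Import numFieldNormedType.Exports.
Local Open Scope classical_set_scope.
Local Open Scope ring_scope.

Section Defs.
Variables (R : realType) (n : nat).
Notation V := 'rV[R]_n.

Definition ebasis (j : 'I_n) : V := delta_mx 0 j.

Definition partial (j : 'I_n) (g : V -> R) : V -> R := fun x => 'D_(ebasis j) g x.

Definition partialn (j : 'I_n) (p : nat) (g : V -> R) : V -> R := iter p (partial j) g.

Definition laplacian (g : V -> R) : V -> R :=
  fun x => \sum_(i < n) partial i (partial i g) x.

Definition laplacian_wo (m : 'I_n) (g : V -> R) : V -> R :=
  fun x => \sum_(i < n | i != m) partial i (partial i g) x.

Definition setc (x : V) (j : 'I_n) (t : R) : V :=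
  \row_i (if i == j then t else x 0 i).

Definition C1 (g : V -> R) : Prop :=
  forall j : 'I_n, (forall x, derivable g x (ebasis j)) /\ continuous (partial j g).

Definition monom (m : 'I_n) (beta : 'I_n -> nat) (x : V) : R :=
  \prod_(i < n | i != m) (x 0 i) ^+ beta i.

Definition absdeg (m : 'I_n) (beta : 'I_n -> nat) : nat :=
  (\sum_(i < n | i != m) beta i)%N.
End Defs.

Definition oint (R : realType) (a b : R) (g : R -> R) : R :=
  if a <= b then Rintegral lebesgue_measure `[a, b] g
  else - Rintegral lebesgue_measure `[b, a] g.

Definition antider1 (R : realType) (x0 : R) (g : R -> R) : R -> R :=
  fun t => oint x0 t g.
Definition antider1n (R : realType) (x0 : R) (p : nat) (g : R -> R) : R -> R :=
  iter p (antider1 x0) g.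

Definition antider (R : realType) (n : nat) (x0 : R) (j : 'I_n) (g : 'rV[R]_n -> R)
  : 'rV[R]_n -> R :=
  fun x => oint x0 (x 0 j) (fun xi => g (setc x j xi)).
Definition antidern (R : realType) (n : nat) (x0 : R) (j : 'I_n) (p : nat)
  (g : 'rV[R]_n -> R) : 'rV[R]_n -> R := iter p (antider x0 j) g.

Definition lambda_of (R : realType) (b : nat) : nat :=
  `| Num.ceil (((b%:R : R) - 1) / 2) |%N.

From HB Require Import structures.
From mathcomp Require Import all_boot all_order all_algebra.
From mathcomp Require Import all_classical all_reals all_analysis.
From mathcomp Require Import zify ring lra.
Import Order.TTheory GRing.Theory Num.Theory.
Import numFieldNormedType.Exports.
Local Open Scope classical_set_scope.
Local Open Scope ring_scope.

(* Write q = M f(x_m) with M the monomial in the variables x_i, i <> m.  On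
   separated products P(x_{i<>m}) g(x_m), the operators d/dx_m and A_{x_m} act on g
   alone and the incomplete Laplacian acts on P alone; so W = M A^(2l+2k) f, and
   both expressions of Q reduce to Q_k = sum_(p <= l) c(k,p) T(p, 2k+2p), where
   T(p,j) = (Lap_{\m}^p M) A^j f and c(k,p) = (-1)^p binom(k+p-1, p).  Since
   Lap T(p, j+2) = T(p+1, j+2) + T(p, j), Pascal's rule
   c(k+1,p) + c(k+1,p+1) = c(k,p+1) telescopes Lap Q_(k+1) into Q_k, the boundary
   term T(l+1, .) being 0 because 2l+2 > |beta| derivations annihilate M.  As
   Q_0 = q, we get Lap^k Q_k = q. *)

Section RealAnalysis.
Context {R : realType}.

Lemma derive_line_eq {U1 U2 : normedModType R} {G : U1 -> R} {H : U2 -> R}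
    {x v : U1} {y w : U2} :
  (forall h : R, G (h *: v + x) = H (h *: w + y)) ->
  (derivable G x v <-> derivable H y w) /\ 'D_v G x = 'D_w H y.
Proof.
move=> GH.
have E : (fun h : R => h^-1 *: ((G \o shift x) (h *: v) - G x)) =
         (fun h : R => h^-1 *: ((H \o shift y) (h *: w) - H y)).
  by apply/funext => h /=; have := GH 0; rewrite !scale0r !add0r => ->; rewrite GH.
by rewrite /derivable /derive E.
Qed.

Lemma derivable1_continuous {g : R -> R} :
  (forall t, derivable g t 1) -> continuous g.
Proof. by move=> dg t; apply/differentiable_continuous/derivable1_diffP. Qed.

Lemma continuous_itv_integrable (a b : R) {g : R -> R} : continuous g ->
  (@lebesgue_measure R).-integrable `[a, b] (EFin \o g).
Proof.
move=> cg; apply: continuous_compact_integrable; first exact: segment_compact.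
exact: continuous_subspaceT.
Qed.

Lemma oint_Rintegral_sub {g : R -> R} (c a b : R) :
  continuous g -> c <= a -> c <= b ->
  oint a b g = \int[lebesgue_measure]_(t in `[c, b]) g t -
               \int[lebesgue_measure]_(t in `[c, a]) g t.
Proof.
move=> cg ca cb.
have intg u v : (@lebesgue_measure R).-integrable [set` `]u, v]] (EFin \o g).
  apply: integrableS (continuous_itv_integrable u v cg) => //.
  by apply: subset_itvr; rewrite bnd_simp.
rewrite /oint; case: ifPn => [ab|]; last rewrite -ltNge => /ltW ba.
  rewrite (@Rintegral_itvB _ g (BLeft c) (BRight b) a) ?bnd_simp //;
    last exact: continuous_itv_integrable.
  by rewrite Rintegral_itv_obnd_cbnd.
rewrite -[RHS]opprB (@Rintegral_itvB _ g (BLeft c) (BRight a) b) ?bnd_simp //;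
  last exact: continuous_itv_integrable.
by rewrite Rintegral_itv_obnd_cbnd.
Qed.

Lemma ointZl (a b c : R) {g : R -> R} : continuous g ->
  oint a b (fun t => c * g t) = c * oint a b g.
Proof.
move=> cg; rewrite /oint; case: ifP => _;
  by rewrite RintegralZl ?mulrN //; exact: continuous_itv_integrable.
Qed.

Lemma antider1_derive (x0 : R) {g : R -> R} (t : R) : continuous g ->
  derivable (antider1 x0 g) t 1 /\ 'D_1 (antider1 x0 g) t = g t.
Proof.
(* Integrate from a base point [c] strictly below [x0] and [t], where FTC1 applies. *)
move=> cg; set c := Num.min x0 t - 1.
have ct : c < t by rewrite /c ltrBlDr ltr_pwDr // ge_min lexx orbT.
have cx0 : c <= x0 by rewrite /c lerBlDr ler_wpDr // ge_min lexx.
pose F s := \int[lebesgue_measure]_(u in `[c, s]) g u.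
have FE : \forall s \near t, (F - cst (F x0)) s = antider1 x0 g s.
  near=> s; rewrite /antider1 (oint_Rintegral_sub c x0 s cg cx0) //.
  by apply: ltW; near: s; exact: lt_nbhsr.
have [dF dFE] := @continuous_FTC1_closed R g c t (t + 1) (ltr_pwDr ltr01 (lexx t))
  (continuous_itv_integrable _ _ cg) ct (cg t).
have dFc : derivable (F - cst (F x0)) t 1 := derivableB dF (derivable_cst _ _ _).
split; first exact: near_eq_derivable FE dFc.
rewrite -(near_eq_derive _ FE) (deriveB dF (derivable_cst _ _ _)) derive_cst.
by rewrite subr0 -derive1E.
Unshelve. all: by end_near.
Qed.

Lemma antider1n_derivable (x0 : R) {f : R -> R} :
  (forall t, derivable f t 1) -> forall j t, derivable (antider1n x0 j f) t 1.
Proof.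
move=> df; elim=> [|j IH] t //.
exact: (antider1_derive x0 t (derivable1_continuous IH)).1.
Qed.

Lemma derive_antider1nS (x0 : R) {f : R -> R} :
  (forall t, derivable f t 1) -> forall j, 'D_1 (antider1n x0 j.+1 f) = antider1n x0 j f.
Proof.
move=> df j; apply/funext => t.
exact: (antider1_derive x0 t (derivable1_continuous (antider1n_derivable x0 df j))).2.
Qed.

End RealAnalysis.

Section SeparatedVariables.
Context {R : realType} {n : nat} (m : 'I_n).
Notation V := 'rV[R]_n.
Notation L := (laplacian_wo m).

Lemma ebasis_shiftE (h : R) (j i : 'I_n) (x : V) :
  (h *: ebasis R j + x) 0 i = if i == j then h + x 0 i else x 0 i.
Proof. by rewrite !mxE eqxx /=; case: eqP => _; rewrite ?mulr1 ?mulr0 ?add0r. Qed.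

Lemma setc_at (x : V) (j : 'I_n) (t : R) : setc x j t 0 j = t.
Proof. by rewrite mxE eqxx. Qed.

Lemma ebasis_shift_setc (h : R) (x : V) :
  h *: ebasis R m + x = setc x m (h + x 0 m).
Proof. by apply/rowP => i; rewrite ebasis_shiftE mxE; case: eqP => [->|]. Qed.

Lemma partial_cst (j : 'I_n) (c : R) : partial j (cst c : V -> R) = cst 0.
Proof. by apply/funext => x; rewrite /partial derive_cst. Qed.

Definition m_free (P : V -> R) := forall x t, P (setc x m t) = P x.

Definition prodm (P : V -> R) (g : R -> R) : V -> R := fun x => P x * g (x 0 m).

Lemma derive_prodm_m {P : V -> R} {g : R -> R} (x : V) :
  m_free P -> derivable g (x 0 m) 1 ->
  derivable (prodm P g) x (ebasis R m) /\
  'D_(ebasis R m) (prodm P g) x = P x * 'D_1 g (x 0 m).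
Proof.
move=> mP dg.
have line h : prodm P g (h *: ebasis R m + x) = (P x \*: g) (h *: 1 + x 0 m).
  by rewrite /prodm ebasis_shift_setc mP setc_at [h *: 1]mulr1.
have [Eder ->] := derive_line_eq line.
by split; [apply/Eder/derivableZ | rewrite deriveZ].
Qed.

Lemma derive_prodm_neq {P : V -> R} (g : R -> R) {x : V} {j : 'I_n} :
  j != m -> derivable P x (ebasis R j) ->
  derivable (prodm P g) x (ebasis R j) /\
  'D_(ebasis R j) (prodm P g) x = 'D_(ebasis R j) P x * g (x 0 m).
Proof.
move=> jm dP.
have line h : prodm P g (h *: ebasis R j + x) =
              (g (x 0 m) \*: P) (h *: ebasis R j + x).
  by rewrite /prodm ebasis_shiftE eq_sym (negPf jm) mulrC.
have [Eder ->] := derive_line_eq line.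
by split; [apply/Eder/derivableZ | rewrite deriveZ // mulrC].
Qed.

(* A derivative-based stand-in for ``polynomial of degree at most [d] in the x_i,
   i <> m, and independent of x_m'': each derivation along some x_i, i <> m, lowers
   [d], and degree 0 means constant. *)
Fixpoint mfree_deg_le (d : nat) (P : V -> R) : Prop :=
  m_free P /\
  if d is d'.+1 then
    forall j, j != m ->
      (forall x, derivable P x (ebasis R j)) /\ mfree_deg_le d' (partial j P)
  else exists c, P = cst c.

Lemma mfree_deg_le_m_free {d} {P : V -> R} : mfree_deg_le d P -> m_free P.
Proof. by case: d => [|d] []. Qed.

Lemma mfree_deg_le_derivable {d} {P : V -> R} {j} x :
  mfree_deg_le d P -> j != m -> derivable P x (ebasis R j).
Proof.
case: d => [|d] /= [_ dP] jm; last exact: (dP j jm).1.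
by case: dP => c ->; exact: derivable_cst.
Qed.

Lemma mfree_deg_le_cst d (c : R) : mfree_deg_le d (cst c).
Proof.
elim: d c => [|d IH] c; first by split; last exists c.
split=> // j _; split; first by move=> x; exact: derivable_cst.
by rewrite partial_cst.
Qed.

Lemma mfree_deg_le_partial {d} {P : V -> R} {j} :
  mfree_deg_le d P -> j != m -> mfree_deg_le d.-1 (partial j P).
Proof.
case: d => [|d] /= [_ dP] jm; last exact: (dP j jm).2.
by case: dP => c ->; rewrite partial_cst; exact: (mfree_deg_le_cst 0 0).
Qed.

Lemma mfree_deg_leD {d} {P1 P2 : V -> R} :
  mfree_deg_le d P1 -> mfree_deg_le d P2 -> mfree_deg_le d (P1 + P2).
Proof.
elim: d P1 P2 => [|d IH] P1 P2 [mP1 H1] [mP2 H2].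
  split; first by move=> x t; rewrite addrfctE /= mP1 mP2.
  by case: H1 H2 => [c1 ->] [c2 ->]; exists (c1 + c2).
split; first by move=> x t; rewrite addrfctE /= mP1 mP2.
move=> j jm; have [dP1 P1d] := H1 j jm; have [dP2 P2d] := H2 j jm.
split; first by move=> x; exact: derivableD.
have -> : partial j (P1 + P2) = partial j P1 + partial j P2.
  by apply/funext => x; rewrite /partial deriveD.
exact: IH.
Qed.

Lemma mfree_deg_leZ {d} (c : R) {P : V -> R} :
  mfree_deg_le d P -> mfree_deg_le d (c \*: P).
Proof.
elim: d P => [|d IH] P [mP H].
  split; first by move=> x t /=; rewrite mP.
  by case: H => [c' ->]; exists (c * c').
split; first by move=> x t /=; rewrite mP.
move=> j jm; have [dP Pd] := H j jm.
split; first by move=> x; exact: derivableZ.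
have -> : partial j (c \*: P) = c \*: partial j P.
  by apply/funext => x; rewrite /partial deriveZ.
exact: IH.
Qed.

Lemma mfree_deg_le_sum d (G : 'I_n -> V -> R) :
  (forall i, i != m -> mfree_deg_le d (G i)) ->
  mfree_deg_le d (\sum_(i < n | i != m) G i).
Proof.
move=> HG; apply: big_ind HG; first exact: (mfree_deg_le_cst d 0).
by move=> P1 P2; exact: mfree_deg_leD.
Qed.

Lemma laplacian_woE (P : V -> R) :
  L P = \sum_(i < n | i != m) partial i (partial i P).
Proof. by rewrite fct_sumE. Qed.

Lemma mfree_deg_le_laplacian_wo {d} {P : V -> R} :
  mfree_deg_le d P -> mfree_deg_le (d - 2) (L P).
Proof.
move=> dP; rewrite laplacian_woE; apply: mfree_deg_le_sum => i im.
have -> : (d - 2 = d.-1.-1)%N by lia.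
exact: mfree_deg_le_partial (mfree_deg_le_partial dP im) im.
Qed.

Lemma mfree_deg_le_iter_laplacian_wo {d} {P : V -> R} p :
  mfree_deg_le d P -> mfree_deg_le (d - 2 * p) (iter p L P).
Proof.
move=> dP; elim: p => [|p IH]; first by rewrite muln0 subn0.
have -> : (d - 2 * p.+1 = (d - 2 * p) - 2)%N by lia.
exact: mfree_deg_le_laplacian_wo.
Qed.

Lemma laplacian_wo_deg_le1 {d} {P : V -> R} :
  mfree_deg_le d P -> (d <= 1)%N -> L P = cst 0.
Proof.
move=> dP d1; apply/funext => x; apply: big1 => i im.
have [_ [c ->]] : mfree_deg_le 0 (partial i P).
  by case: d dP d1 => [|[|//]] dP _; exact: mfree_deg_le_partial dP im.
by rewrite partial_cst.
Qed.

Definition decr (g : 'I_n -> nat) (j : 'I_n) : 'I_n -> nat :=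
  fun i => if i == j then (g i).-1 else g i.

Lemma monom_m_free (g : 'I_n -> nat) : m_free (monom m g).
Proof. by move=> x t; apply: eq_bigr => i im; rewrite mxE (negPf im). Qed.

Lemma derive_monom (g : 'I_n -> nat) (x : V) {j : 'I_n} : j != m ->
  derivable (monom m g) x (ebasis R j) /\
  'D_(ebasis R j) (monom m g) x = (g j)%:R * monom m (decr g j) x.
Proof.
move=> jm; pose C := \prod_(i < n | (i != m) && (i != j)) x 0 i ^+ g i.
have line h : monom m g (h *: ebasis R j + x) =
              (C \*: (@GRing.exp R ^~ (g j))) (h *: 1 + x 0 j).
  rewrite /monom (bigD1 j) //= ebasis_shiftE eqxx [h *: 1]mulr1 mulrC.
  by congr (_ * _); apply: eq_bigr => i /andP[_ ij]; rewrite ebasis_shiftE (negPf ij).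
have [Eder ->] := derive_line_eq line.
have dX : derivable (@GRing.exp R ^~ (g j)) (x 0 j) 1 by apply: exprn_derivable.
split; first exact/Eder/derivableZ.
rewrite (deriveZ _ dX) exp_derive /monom (bigD1 j jm) /decr eqxx /=.
have -> : \prod_(i < n | (i != m) && (i != j))
    x 0 i ^+ (if i == j then (g i).-1 else g i) = C.
  by apply: eq_bigr => i /andP[_ /negPf ->].
rewrite [_%:A]mulr1 /GRing.scale /=; ring.
Qed.

Lemma absdeg_decr (g : 'I_n -> nat) (j : 'I_n) : j != m -> (0 < g j)%N ->
  absdeg m (decr g j) = (absdeg m g).-1.
Proof.
move=> jm gj; rewrite /absdeg (bigD1 j jm) [in RHS](bigD1 j jm) /= /decr eqxx.
rewrite (eq_bigr g) => [|i /andP[_ /negPf ->] //].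
by case: (g j) gj.
Qed.

Lemma mfree_deg_le_monom (g : 'I_n -> nat) : mfree_deg_le (absdeg m g) (monom m g).
Proof.
suff monom_deg d g' : absdeg m g' = d -> mfree_deg_le d (monom m g').
  exact: monom_deg.
elim: d g' => [|d IH] {}g dg.
  split; [exact: monom_m_free | exists 1].
  apply/funext => x; rewrite /monom big1 // => i im.
  move: dg; rewrite /absdeg (bigD1 i im) /= => /eqP.
  by rewrite addn_eq0 => /andP[/eqP -> _].
split=> [|j jm]; first exact: monom_m_free.
split=> [x|]; first exact: (derive_monom g x jm).1.
have -> : partial j (monom m g : V -> R) = (g j)%:R \*: monom m (decr g j).
  by apply/funext => x; exact: (derive_monom g x jm).2.
have [gj0|gj] := posnP (g j).
  rewrite gj0 (_ : _ \*: _ = cst 0); first exact: mfree_deg_le_cst.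
  by apply/funext => x /=; rewrite scale0r.
by apply/mfree_deg_leZ/IH; rewrite absdeg_decr // dg.
Qed.

Lemma C1_monom_derivable {beta : 'I_n -> nat} {f : R -> R} :
  C1 (fun x : V => f (x 0 m) * monom m beta x) -> forall t, derivable f t 1.
Proof.
set q := fun x : V => _; move=> C1q t; have [dq _] := C1q m.
pose x := setc (const_mx 1 : V) m t.
have monom1 : monom m beta x = 1.
  by rewrite /monom big1 // => i im; rewrite !mxE (negPf im) expr1n.
have line h : q (h *: ebasis R m + x) = f (h *: 1 + t).
  by rewrite /q ebasis_shift_setc monom_m_free monom1 !setc_at [h *: 1]mulr1 mulr1.
have [[Eder _] _] := derive_line_eq line; exact: Eder.
Qed.

Lemma partial_prodm_m {P : V -> R} {g : R -> R} : m_free P ->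
  (forall t, derivable g t 1) -> partial m (prodm P g) = prodm P ('D_1 g).
Proof. by move=> mP dg; apply/funext => x; exact: (derive_prodm_m x mP (dg _)).2. Qed.

Lemma partial_prodm_neq {P : V -> R} (g : R -> R) {j : 'I_n} : j != m ->
  (forall x, derivable P x (ebasis R j)) ->
  partial j (prodm P g) = prodm (partial j P) g.
Proof. by move=> jm dP; apply/funext => x; exact: (derive_prodm_neq g jm (dP x)).2. Qed.

Lemma laplacian_wo_prodm {d} {P : V -> R} (g : R -> R) :
  mfree_deg_le d P -> L (prodm P g) = prodm (L P) g.
Proof.
move=> dP; apply/funext => x; rewrite /laplacian_wo /prodm mulr_suml.
apply: eq_bigr => i im.
rewrite (partial_prodm_neq g im (fun y => mfree_deg_le_derivable y dP im)).
by rewrite (partial_prodm_neq g im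
  (fun y => mfree_deg_le_derivable y (mfree_deg_le_partial dP im) im)).
Qed.

Lemma iter_laplacian_wo_prodm {d} {P : V -> R} (g : R -> R) p :
  mfree_deg_le d P -> iter p L (prodm P g) = prodm (iter p L P) g.
Proof.
move=> dP; elim: p => [//|p IH].
by rewrite iterS IH (laplacian_wo_prodm g (mfree_deg_le_iter_laplacian_wo p dP)).
Qed.

Lemma prodm_derivable {d} {P : V -> R} {g : R -> R} {i : 'I_n} {x : V} :
  mfree_deg_le d P -> (forall t, derivable g t 1) ->
  derivable (prodm P g) x (ebasis R i).
Proof.
move=> dP dg; have [->|im] := eqVneq i m.
  exact: (derive_prodm_m x (mfree_deg_le_m_free dP) (dg _)).1.
exact: (derive_prodm_neq g im (mfree_deg_le_derivable x dP im)).1.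
Qed.

Lemma partial_prodm_derivable {d} {P : V -> R} {g : R -> R} {i : 'I_n} {x : V} :
  mfree_deg_le d P -> (forall t, derivable g t 1) ->
  (forall t, derivable ('D_1 g) t 1) ->
  derivable (partial i (prodm P g)) x (ebasis R i).
Proof.
move=> dP dg ddg; have [->|im] := eqVneq i m.
  rewrite (partial_prodm_m (mfree_deg_le_m_free dP) dg).
  exact: prodm_derivable dP ddg.
rewrite (partial_prodm_neq g im (fun y => mfree_deg_le_derivable y dP im)).
exact: prodm_derivable (mfree_deg_le_partial dP im) dg.
Qed.

Lemma laplacian_prodm {d} {P : V -> R} {g : R -> R} :
  mfree_deg_le d P -> (forall t, derivable g t 1) ->
  (forall t, derivable ('D_1 g) t 1) ->
  laplacian (prodm P g) = prodm (L P) g + prodm P ('D_1 ('D_1 g)).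
Proof.
move=> dP dg ddg; have mP := mfree_deg_le_m_free dP.
apply/funext => x; rewrite /laplacian (bigD1 m) //= addrC.
rewrite (partial_prodm_m mP dg) (partial_prodm_m mP ddg).
by rewrite -(laplacian_wo_prodm g dP).
Qed.

Lemma antider_prodm (x0 : R) {P : V -> R} {g : R -> R} : m_free P -> continuous g ->
  antider x0 m (prodm P g) = prodm P (antider1 x0 g).
Proof.
move=> mP cg; apply/funext => x; rewrite /antider /prodm /antider1 -ointZl //.
by congr oint; apply/funext => t; rewrite mP setc_at.
Qed.

Lemma partial_lincomb {N} (c : 'I_N -> R) {G : 'I_N -> V -> R} {i : 'I_n} :
  (forall p x, derivable (G p) x (ebasis R i)) ->
  partial i (\sum_(p < N) c p \*: G p) = \sum_(p < N) c p \*: partial i (G p).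
Proof.
move=> dG; apply/funext => x; rewrite /partial derive_sum => [|p].
  by rewrite !fct_sumE; apply: eq_bigr => p _; rewrite deriveZ.
exact: derivableZ.
Qed.

Lemma laplacian_lincomb {N} (c : 'I_N -> R) {G : 'I_N -> V -> R} :
  (forall p i x, derivable (G p) x (ebasis R i)) ->
  (forall p i x, derivable (partial i (G p)) x (ebasis R i)) ->
  laplacian (\sum_(p < N) c p \*: G p) = \sum_(p < N) c p \*: laplacian (G p).
Proof.
move=> dG ddG; apply/funext => x.
transitivity (\sum_(i < n) \sum_(p < N) c p * partial i (partial i (G p)) x).
  apply: eq_bigr => i _.
  rewrite (partial_lincomb c (fun p => dG p i)).
  by rewrite (partial_lincomb c (fun p => ddG p i)) fct_sumE.
rewrite exchange_big fct_sumE; apply: eq_bigr => p _.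
by rewrite /= /laplacian -mulr_sumr.
Qed.

End SeparatedVariables.

Section LaplacianCoefficients.
Variable R : comPzRingType.

(* Truncated subtraction gives [lapcoef 0 0 = 1], i.e. binom(-1, 0) = 1. *)
Definition lapcoef (k p : nat) : R := (-1) ^+ p * ('C(k + p - 1, p))%:R.

Lemma lapcoef0 k : lapcoef k 0 = 1.
Proof. by rewrite /lapcoef expr0 mul1r bin0. Qed.

Lemma lapcoef0S p : lapcoef 0 p.+1 = 0.
Proof. by rewrite /lapcoef add0n subSS subn0 bin_small // mulr0. Qed.

Lemma lapcoefS k p : lapcoef k.+1 p + lapcoef k.+1 p.+1 = lapcoef k p.+1.
Proof.
rewrite /lapcoef (_ : k.+1 + p - 1 = k + p)%N; last lia.
rewrite (_ : k.+1 + p.+1 - 1 = (k + p).+1)%N; last lia.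
rewrite (_ : k + p.+1 - 1 = k + p)%N; last lia.
by rewrite binS natrD exprS; ring.
Qed.

Lemma sum_lapcoef_pascal lam k (S : nat -> R) : S lam.+1 = 0 ->
  \sum_(p < lam.+1) lapcoef k.+1 p * (S p.+1 + S p) =
  \sum_(p < lam.+1) lapcoef k p * S p.
Proof.
move=> S0; under eq_bigr => p _ do rewrite mulrDr.
rewrite big_split /= big_ord_recr /= S0 mulr0 addr0.
rewrite big_ord_recl [in RHS]big_ord_recl !lapcoef0 addrCA; congr (_ + _).
rewrite -big_split; apply: eq_bigr => p _.
by rewrite lift0 /= -mulrDl lapcoefS.
Qed.

End LaplacianCoefficients.

Lemma leq_double_lambda_of (R : realType) (b : nat) :
  (b <= 2 * lambda_of R b + 1)%N.
Proof.
rewrite /lambda_of; set c := Num.ceil _.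
have b0 : (0 : R) <= b%:R := ler0n R b.
have c0 : 0 <= c by rewrite /c ceil_ge0; lra.
have := ceil_ge ((b%:R - 1) / 2 : R); rewrite -/c -(gez0_abs c0).
set l := `|c|%N => bl; rewrite -(ler_nat R) natrD natrM.
have bl' : (b%:R - 1) / 2 <= (l%:R : R) := bl.
lra.
Qed.

Section PolyharmonicSeparated.
Context {R : realType} {n : nat} (m : 'I_n) (x0 : R) (f : R -> R).
Hypothesis df : forall t, derivable f t 1.
Notation V := 'rV[R]_n.
Notation L := (laplacian_wo m).
Local Notation F j := (antider1n x0 j f).

Lemma partialn_prodm_antider1n (P : V -> R) r j : m_free m P ->
  partialn m r (prodm m P (F (r + j))) = prodm m P (F j).
Proof.
move=> mP; elim: r j => [//|r IH] j.
rewrite /partialn iterS -/(partialn m r _) addSnnS IH.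
rewrite (partial_prodm_m m mP (antider1n_derivable x0 df _)).
by rewrite (derive_antider1nS x0 df).
Qed.

Lemma antidern_prodm_antider1n (P : V -> R) r j : m_free m P ->
  antidern x0 m r (prodm m P (F j)) = prodm m P (F (r + j)).
Proof.
move=> mP; elim: r => [//|r IH].
rewrite /antidern iterS -/(antidern x0 m r _) IH addSn.
have cF := derivable1_continuous (antider1n_derivable x0 df (r + j)).
by rewrite (antider_prodm m x0 mP cF).
Qed.

Variable beta : 'I_n -> nat.
Local Notation M := (@monom R n m beta).

Definition lap_term p j : V -> R := prodm m (iter p L M) (F j).

Lemma mfree_deg_le_iter_monom p :
  mfree_deg_le m (absdeg m beta - 2 * p) (iter p L M).
Proof.
exact (mfree_deg_le_iter_laplacian_wo m p (mfree_deg_le_monom (R:=R) m beta)).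
Qed.

Lemma lap_term_derivable p j i x : derivable (lap_term p j) x (ebasis R i).
Proof.
exact (prodm_derivable m (mfree_deg_le_iter_monom p) (antider1n_derivable x0 df j)).
Qed.

Lemma partial_lap_term_derivable p j i x :
  derivable (partial i (lap_term p j.+1)) x (ebasis R i).
Proof.
rewrite /lap_term; apply: (partial_prodm_derivable m (mfree_deg_le_iter_monom p)).
  exact: antider1n_derivable.
by rewrite (derive_antider1nS x0 df j); exact: antider1n_derivable.
Qed.

Lemma laplacian_lap_term p j :
  laplacian (lap_term p j.+2) = lap_term p.+1 j.+2 + lap_term p j.
Proof.
rewrite /lap_term (laplacian_prodm m (mfree_deg_le_iter_monom p)).
- by rewrite (derive_antider1nS x0 df j.+1) (derive_antider1nS x0 df j).
- exact: antider1n_derivable.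
- by rewrite (derive_antider1nS x0 df j.+1); exact: antider1n_derivable.
Qed.

Section Truncation.
Variable lam : nat.
Hypothesis lam_ge : (absdeg m beta <= 2 * lam + 1)%N.

Lemma lap_term_eq0 j : lap_term lam.+1 j = cst 0.
Proof.
rewrite /lap_term iterS (laplacian_wo_deg_le1 m (mfree_deg_le_iter_monom lam));
  last lia.
by apply/funext => x; rewrite /prodm /= mul0r.
Qed.

Definition Qsum k : V -> R :=
  \sum_(p < lam.+1) lapcoef R k p \*: lap_term p (2 * k + 2 * p).

Lemma laplacian_Qsum k : laplacian (Qsum k.+1) = Qsum k.
Proof.
have -> : Qsum k.+1 =
    \sum_(p < lam.+1) lapcoef R k.+1 p \*: lap_term p (2 * k + 2 * p).+2.
  apply: eq_bigr => p _.
  by rewrite (_ : 2 * k.+1 + 2 * p = (2 * k + 2 * p).+2)%N //; lia.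
rewrite (laplacian_lincomb _ (fun p => lap_term_derivable p (2 * k + 2 * p).+2)
  (fun p => partial_lap_term_derivable p (2 * k + 2 * p).+1)).
apply/funext => x; rewrite /Qsum !fct_sumE /=.
pose S p := lap_term p (2 * k + 2 * p) x.
transitivity (\sum_(p < lam.+1) lapcoef R k.+1 p * (S p.+1 + S p)).
  apply: eq_bigr => p _; rewrite laplacian_lap_term /S.
  by rewrite (_ : 2 * k + 2 * p.+1 = (2 * k + 2 * p).+2)%N //; lia.
by apply: sum_lapcoef_pascal; rewrite /S lap_term_eq0.
Qed.

Lemma Qsum0 : Qsum 0 = prodm m M f.
Proof.
apply/funext => x; rewrite /Qsum fct_sumE big_ord_recl big1 => [|p _] /=.
  by rewrite lapcoef0 addr0 scale1r.
by rewrite /bump leq0n add1n lapcoef0S scale0r.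
Qed.

Lemma iter_laplacian_Qsum k : iter k (@laplacian R n) (Qsum k) = prodm m M f.
Proof. by elim: k => [|k IH]; rewrite ?Qsum0 // iterSr laplacian_Qsum. Qed.

End Truncation.

Lemma partialn_iter_laplacian_wo_antidern lam k (p : nat) : (p <= lam)%N ->
  partialn m (2 * lam - 2 * p)
    (iter p L (antidern x0 m (2 * lam + 2 * k) (prodm m M (F 0)))) =
  lap_term p (2 * k + 2 * p).
Proof.
move=> p_le; rewrite (antidern_prodm_antider1n _ _ 0 (monom_m_free m beta)) addn0.
rewrite (iter_laplacian_wo_prodm m _ p (mfree_deg_le_monom (R:=R) m beta)).
rewrite (_ : 2 * lam + 2 * k = 2 * lam - 2 * p + (2 * k + 2 * p))%N; last lia.
exact: partialn_prodm_antider1n (mfree_deg_le_m_free m (mfree_deg_le_iter_monom p)).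
Qed.

Lemma antidern_iter_laplacian_wo p j :
  antidern x0 m j (iter p L (prodm m M (F 0))) = lap_term p j.
Proof.
rewrite (iter_laplacian_wo_prodm m _ p (mfree_deg_le_monom (R:=R) m beta)).
rewrite antidern_prodm_antider1n ?addn0 //.
exact (mfree_deg_le_m_free m (mfree_deg_le_iter_monom p)).
Qed.

End PolyharmonicSeparated.

Theorem corollary5p3 (R : realType) (n : nat) (k : nat) (m : 'I_n)
  (beta : 'I_n -> nat) (f : R -> R) (x0 : R) :
  (forall a b : R, lebesgue_measure.-integrable `[a, b] (EFin \o f)) ->
  C1 (fun x : 'rV[R]_n => f (x 0 m) * monom m beta x) ->
  let q := fun x : 'rV[R]_n => f (x 0 m) * monom m beta x in
  let lam := lambda_of R (absdeg m beta) in
  let W := antidern x0 m (2 * lam + 2 * k) q in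
  let Q := fun x : 'rV[R]_n =>
    \sum_(p < lam.+1)
      (-1) ^+ p * ('C(k + p - 1, p))%:R *
        partialn m (2 * lam - 2 * p) (iter p (laplacian_wo m) W) x in
  (forall x, W x = monom m beta x * antider1n x0 (2 * lam + 2 * k) f (x 0 m)) /\
  (forall x, Q x =
     \sum_(p < lam.+1)
       (-1) ^+ p * ('C(k + p - 1, p))%:R *
         antidern x0 m (2 * k + 2 * p) (iter p (laplacian_wo m) q) x) /\
  (forall x, iter k (@laplacian R n) Q x = q x).
Proof.
move=> _ C1q q lam W Q.
have df := C1_monom_derivable m C1q.
have lam_ge : (absdeg m beta <= 2 * lam + 1)%N := leq_double_lambda_of R _.
have qE : q = prodm m (monom m beta) (antider1n x0 0 f).
  by apply/funext => x; rewrite /q /prodm mulrC.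
have WE : W = prodm m (monom m beta) (antider1n x0 (2 * lam + 2 * k) f).
  by rewrite /W qE antidern_prodm_antider1n ?addn0 //; exact: monom_m_free.
have QE : Q = Qsum m x0 f beta lam k.
  apply/funext => x; rewrite /Qsum fct_sumE; apply: eq_bigr => p _ /=.
  by rewrite /W qE partialn_iter_laplacian_wo_antidern // -ltnS.
split; first by move=> x; rewrite WE.
split=> x; last by rewrite QE iter_laplacian_Qsum // qE.
rewrite QE /Qsum fct_sumE; apply: eq_bigr => p _.
by rewrite qE antidern_iter_laplacian_wo.
Qed.
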